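(* Let $\alpha_i,\beta_i,\gamma_i,\delta_i\in(0,\pi)$ satisfy $\alpha_i\pm\beta_i\pm\gamma_i\pm\delta_i\not\equiv0\pmod{2\pi}$ for all sign choices and $M_i>0$, for each $i=1,\dots,4$. Then for each $i$: \[\cos\alpha_i=\varepsilon_i\frac{1-y_iz_iu_i+x_iz_iu_i-x_iy_iu_i}{2\sqrt{x_iz_iu_i(1+y_i)(1+u_iy_i)}},\qquad \cos\gamma_i=\varepsilon_i\frac{1+y_iz_iu_i-x_iz_iu_i-x_iy_iu_i}{2\sqrt{y_iz_iu_i(1+x_i)(1+u_ix_i)}},\] \[\cos\delta_i=\varepsilon_i\frac{1-y_iz_iu_i-x_iz_iu_i+x_iy_iu_i}{2\sqrt{x_iy_iu_i(1+z_i)(1+u_iz_i)}},\qquad \cos\sigma_i=\frac{1-u_i(x_iy_i+x_iz_i+y_iz_i+2x_iy_iz_i)}{2\sqrt{x_iy_iz_iu_i^2(1+x_i)(1+y_i)(1+z_i)}},\] \[\cos\beta_i=\varepsilon_i\frac{u_i(1+x_i)(1+y_i)(1+z_i)+(1+u_ix_i)(1+u_iy_i)(1+u_iz_i)-u_ix_iy_iz_i(u_i-1)^2}{2\sqrt{u_i(1+x_i)(1+y_i)(1+z_i)(1+u_ix_i)(1+u_iy_i)(1+u_iz_i)}}.\]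
   Context: $\sigma_i=(\alpha_i+\beta_i+\gamma_i+\delta_i)/2$, $\varepsilon_i=\operatorname{sign}(\sin\sigma_i)$, $\overline{\alpha}_i=\sigma_i-\alpha_i$, $\overline{\beta}_i=\sigma_i-\beta_i$, $\overline{\gamma}_i=\sigma_i-\gamma_i$, $\overline{\delta}_i=\sigma_i-\delta_i$; $a_i=\sin\alpha_i/\sin\overline{\alpha}_i$, $b_i=\sin\beta_i/\sin\overline{\beta}_i$, $c_i=\sin\gamma_i/\sin\overline{\gamma}_i$, $d_i=\sin\delta_i/\sin\overline{\delta}_i$, $M_i=a_ib_ic_id_i$, $r_i=a_id_i$, $s_i=c_id_i$, $f_i=a_ic_i$, $u_i=1-M_i$, $x_i=1/(r_i-1)$, $y_i=1/(s_i-1)$, $z_i=1/(f_i-1)$. *)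

From Stdlib Require Import Reals.
Open Scope R_scope.

Definition sign (x : R) : R :=
  if Rlt_dec 0 x then 1 else if Rlt_dec x 0 then -1 else 0.

Definition pm (b : bool) : R := if b then 1 else -1.

Section Quad.
Variables (al be ga de : R).

Definition sigm : R := (al + be + ga + de) / 2.
Definition eps : R := sign (sin sigm).
Definition albar : R := sigm - al.
Definition bebar : R := sigm - be.
Definition gabar : R := sigm - ga.
Definition debar : R := sigm - de.
Definition ca : R := sin al / sin albar.
Definition cb : R := sin be / sin bebar.
Definition cc : R := sin ga / sin gabar.
Definition cd : R := sin de / sin debar.
Definition MM : R := ca * cb * cc * cd.
Definition rr : R := ca * cd.
Definition ss : R := cc * cd.
Definition ff : R := ca * cc.
Definition uu : R := 1 - MM.
Definition xx : R := 1 / (rr - 1).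
Definition yy : R := 1 / (ss - 1).
Definition zz : R := 1 / (ff - 1).
End Quad.

Definition admissible (al be ga de : R) : Prop :=
  0 < al < PI /\ 0 < be < PI /\ 0 < ga < PI /\ 0 < de < PI /\
  (forall (s1 s2 s3 : bool) (k : Z),
      al + pm s1 * be + pm s2 * ga + pm s3 * de <> 2 * IZR k * PI) /\
  0 < MM al be ga de.

From Stdlib Require Import Reals Lra Nsatz.
Open Scope R_scope.

(* With the angles written as [2p, 2q, 2r, 2t], the quantities [x, y, z, u]
   are ratios of the sines of [sigma], of the barred angles and of the mixed
   combinations [p + q - r - t], [p + r - q - t], [p + t - q - r]
   (e.g. [x = sin alpha_bar sin delta_bar / (sin sigma sin (p + t - q - r))]),
   all nonzero by the non-congruence hypothesis.  Product-to-sum identities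
   turn each numerator into [2 cos theta] times a product of sines and each
   radicand into a perfect square, whose square root is known up to the sign
   of [sin sigma]: this is where [epsilon] comes from.  That step needs the
   barred sines to be positive, which follows from [M > 0]: at most one barred
   angle leaves [(0, pi)], and a single negative factor would make [M]
   negative. *)

Lemma sign_mul_pos_r (x y : R) : 0 < y -> sign (x * y) = sign x.
Proof.
  intros Hy; unfold sign.
  destruct (Rlt_dec 0 (x * y)), (Rlt_dec 0 x); try nra.
  destruct (Rlt_dec (x * y) 0), (Rlt_dec x 0); nra.
Qed.

Lemma sign_eq_div_abs (x : R) : x <> 0 -> sign x = x / Rabs x.
Proof.
  intros Hx; unfold sign.
  destruct (Rlt_dec 0 x).
  - rewrite Rabs_pos_eq by lra; field; lra.
  - destruct (Rlt_dec x 0); [| lra].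
    rewrite Rabs_left by lra; field; lra.
Qed.

Lemma eq_sign_div_sqrt (c m M k P e N X : R) :
  2 * c * m = M -> m <> 0 -> k <> 0 -> 0 < P -> e = sign k ->
  N = M * P / (m * k) -> X = (P / k) ^ 2 ->
  c = e * N / (2 * sqrt X).
Proof.
  intros HM Hm Hk HP -> -> ->.
  assert (Habs : 0 < Rabs k) by (apply Rabs_pos_lt; exact Hk).
  replace ((P / k) ^ 2) with ((P / Rabs k) ^ 2)
    by (replace ((P / k) ^ 2) with (P ^ 2 / k ^ 2) by (field; exact Hk);
        rewrite <- pow2_abs with (x := k); field; lra).
  rewrite sqrt_pow2 by (apply Rlt_le, Rdiv_lt_0_compat; assumption).
  rewrite sign_eq_div_abs by exact Hk.
  rewrite <- HM; field; repeat split; lra.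
Qed.

Lemma eq_div_sqrt (c m M k P N X : R) :
  2 * c * m = M -> m <> 0 -> 0 < k -> 0 < P ->
  N = M * P / (m * k) -> X = (P / k) ^ 2 ->
  c = N / (2 * sqrt X).
Proof.
  intros HM Hm Hk HP HN HX.
  assert (Hsign : 1 = sign k) by (unfold sign; destruct (Rlt_dec 0 k); [reflexivity | lra]).
  rewrite (eq_sign_div_sqrt c m M k P 1 N X); auto; [| lra].
  rewrite Rmult_1_l; reflexivity.
Qed.

Lemma pos_of_div_pos (n d : R) : 0 < n / d -> 0 < n -> 0 < d.
Proof.
  intros Hq Hn.
  destruct (Rtotal_order d 0) as [Hd | [Hd | Hd]]; [| | exact Hd].
  - assert (n = n / d * d) by (field; lra); nra.
  - subst d; unfold Rdiv in Hq; rewrite Rinv_0, Rmult_0_r in Hq; lra.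
Qed.

Lemma ratio_prod_sub1_inv (a d A D K : R) :
  a * d = A * D + K -> A <> 0 -> D <> 0 -> K <> 0 ->
  1 / (a / A * (d / D) - 1) = A * D / K.
Proof.
  intros E HA HD HK.
  replace (a / A * (d / D) - 1) with ((a * d - A * D) / (A * D)) by (field; auto).
  rewrite E; field; auto.
Qed.

Lemma sin_nonneg_of_other_neg (X Y : R) :
  sin X < 0 -> 0 < X + Y < 2 * PI -> - PI < X - Y < PI -> 0 <= sin Y.
Proof.
  intros Hneg Hsum Hdiff.
  assert (HX : X < 0 \/ PI < X).
  { destruct (Rle_dec 0 X) as [H0 |], (Rle_dec X PI) as [HPI |]; try lra.
    pose proof (sin_ge_0 X H0 HPI); lra. }
  apply sin_ge_0; lra.
Qed.

Lemma pos_of_prod4_pos (a b c d : R) :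
  0 < a * b * c * d -> (a < 0 -> 0 <= b /\ 0 <= c /\ 0 <= d) -> 0 < a.
Proof.
  intros Hprod Hneg.
  destruct (Rtotal_order a 0) as [Ha | [Ha | Ha]]; [| subst; lra | exact Ha].
  destruct (Hneg Ha) as (Hb & Hc & Hd).
  assert (0 <= b * c * d) by (repeat apply Rmult_le_pos; assumption).
  nra.
Qed.

Lemma prod4_pos_all_pos (a b c d : R) :
  0 < a * b * c * d ->
  (a < 0 -> 0 <= b /\ 0 <= c /\ 0 <= d) -> (b < 0 -> 0 <= a /\ 0 <= c /\ 0 <= d) ->
  (c < 0 -> 0 <= a /\ 0 <= b /\ 0 <= d) -> (d < 0 -> 0 <= a /\ 0 <= b /\ 0 <= c) ->
  0 < a /\ 0 < b /\ 0 < c /\ 0 < d.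
Proof.
  intros Hprod Ha Hb Hc Hd; repeat split.
  - exact (pos_of_prod4_pos a b c d Hprod Ha).
  - apply (pos_of_prod4_pos b a c d); [lra | tauto].
  - apply (pos_of_prod4_pos c a b d); [lra | tauto].
  - apply (pos_of_prod4_pos d a b c); [lra | tauto].
Qed.

Section HalfAngles.

Variables p q r t : R.

Local Notation Ssig := (sin (p + q + r + t)).
Local Notation Sal := (sin (q + r + t - p)).
Local Notation Sbe := (sin (p + r + t - q)).
Local Notation Sga := (sin (p + q + t - r)).
Local Notation Sde := (sin (p + q + r - t)).
Local Notation W1 := (sin (p + q - r - t)).
Local Notation W2 := (sin (p + r - q - t)).
Local Notation W3 := (sin (p + t - q - r)).

Ltac half_angle_identity :=
  pose proof (sin2_cos2 p); pose proof (sin2_cos2 q);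
  pose proof (sin2_cos2 r); pose proof (sin2_cos2 t); unfold Rsqr in *;
  rewrite <- ?Rplus_diag;
  repeat rewrite ?sin_plus, ?cos_plus, ?sin_minus, ?cos_minus;
  nsatz.

Lemma sin_mul_sigma_pt : sin (2 * p) * sin (2 * t) = Sal * Sde + Ssig * W3.
Proof. half_angle_identity. Qed.

Lemma sin_mul_sigma_rt : sin (2 * r) * sin (2 * t) = Sga * Sde - Ssig * W1.
Proof. half_angle_identity. Qed.

Lemma sin_mul_sigma_pr : sin (2 * p) * sin (2 * r) = Sal * Sga + Ssig * W2.
Proof. half_angle_identity. Qed.

Lemma sin_mul_bars_pt : sin (2 * p) * sin (2 * t) = Sbe * Sga - W1 * W2.
Proof. half_angle_identity. Qed.

Lemma sin_mul_bars_rt : sin (2 * r) * sin (2 * t) = Sal * Sbe + W2 * W3.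
Proof. half_angle_identity. Qed.

Lemma sin_mul_bars_pr : sin (2 * p) * sin (2 * r) = Sbe * Sde - W1 * W3.
Proof. half_angle_identity. Qed.

Lemma sin_mul4_sigma :
  sin (2 * p) * sin (2 * q) * sin (2 * r) * sin (2 * t)
  = Sal * Sbe * Sga * Sde + Ssig * W1 * W2 * W3.
Proof. half_angle_identity. Qed.

Lemma two_cos_2p_mul :
  2 * cos (2 * p) * (sin (2 * r) * sin (2 * t))
  = Ssig * Sbe - Sga * W3 - Sal * W1 - Sde * W2.
Proof. half_angle_identity. Qed.

Lemma two_cos_2r_mul :
  2 * cos (2 * r) * (sin (2 * p) * sin (2 * t))
  = Ssig * Sbe + Sga * W3 + Sal * W1 - Sde * W2.
Proof. half_angle_identity. Qed.

Lemma two_cos_2t_mul :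
  2 * cos (2 * t) * (sin (2 * p) * sin (2 * r))
  = Ssig * Sbe - Sga * W3 + Sal * W1 + Sde * W2.
Proof. half_angle_identity. Qed.

Lemma two_cos_sigma_mul :
  2 * cos (p + q + r + t) * (sin (2 * p) * sin (2 * r) * sin (2 * t))
  = Ssig * Ssig * Sbe - Ssig * (Sde * W2 - Sal * W1 + Sga * W3) - 2 * Sal * Sga * Sde.
Proof. half_angle_identity. Qed.

Lemma two_cos_2q_mul :
  2 * cos (2 * q) * (Ssig * Sbe) = Sbe * Sbe + Ssig * Ssig - sin (2 * q) * sin (2 * q).
Proof. half_angle_identity. Qed.

Lemma sigm_double : sigm (2 * p) (2 * q) (2 * r) (2 * t) = p + q + r + t.
Proof. unfold sigm; field. Qed.

Lemma albar_double : albar (2 * p) (2 * q) (2 * r) (2 * t) = q + r + t - p.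
Proof. unfold albar, sigm; field. Qed.

Lemma bebar_double : bebar (2 * p) (2 * q) (2 * r) (2 * t) = p + r + t - q.
Proof. unfold bebar, sigm; field. Qed.

Lemma gabar_double : gabar (2 * p) (2 * q) (2 * r) (2 * t) = p + q + t - r.
Proof. unfold gabar, sigm; field. Qed.

Lemma debar_double : debar (2 * p) (2 * q) (2 * r) (2 * t) = p + q + r - t.
Proof. unfold debar, sigm; field. Qed.

Lemma eps_double : eps (2 * p) (2 * q) (2 * r) (2 * t) = sign Ssig.
Proof. unfold eps; rewrite sigm_double; reflexivity. Qed.

Hypothesis adm : admissible (2 * p) (2 * q) (2 * r) (2 * t).

Lemma sin_double_pos :
  0 < sin (2 * p) /\ 0 < sin (2 * q) /\ 0 < sin (2 * r) /\ 0 < sin (2 * t).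
Proof.
  destruct adm as (Hp & Hq & Hr & Ht & _).
  repeat split; apply sin_gt_0; lra.
Qed.

Lemma sin_neq0_of_double (w : R) (sg s1 s2 s3 : bool) :
  2 * w = pm sg * (2 * p + pm s1 * (2 * q) + pm s2 * (2 * r) + pm s3 * (2 * t)) ->
  sin w <> 0.
Proof.
  intros Hw Hsin.
  destruct (sin_eq_0_0 w Hsin) as [k Hk].
  destruct adm as (_ & _ & _ & _ & Hcomb & _).
  apply (Hcomb s1 s2 s3 (if sg then k else (- k)%Z)).
  set (comb := 2 * p + pm s1 * (2 * q) + pm s2 * (2 * r) + pm s3 * (2 * t)) in *.
  destruct sg; cbn [pm] in Hw; [| rewrite opp_IZR]; lra.
Qed.

Lemma sin_sigma_neq0 : Ssig <> 0.
Proof. apply (sin_neq0_of_double _ true true true true); cbn [pm]; ring. Qed.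

Lemma W1_neq0 : W1 <> 0.
Proof. apply (sin_neq0_of_double _ true true false false); cbn [pm]; ring. Qed.

Lemma W2_neq0 : W2 <> 0.
Proof. apply (sin_neq0_of_double _ true false true false); cbn [pm]; ring. Qed.

Lemma W3_neq0 : W3 <> 0.
Proof. apply (sin_neq0_of_double _ true false false true); cbn [pm]; ring. Qed.

Lemma sin_bars_neq0 : Sal <> 0 /\ Sbe <> 0 /\ Sga <> 0 /\ Sde <> 0.
Proof.
  repeat split.
  - apply (sin_neq0_of_double _ false false false false); cbn [pm]; ring.
  - apply (sin_neq0_of_double _ true false true true); cbn [pm]; ring.
  - apply (sin_neq0_of_double _ true true false true); cbn [pm]; ring.
  - apply (sin_neq0_of_double _ true true true false); cbn [pm]; ring.
Qed.

Ltac nonzero :=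
  pose proof sin_sigma_neq0; pose proof W1_neq0; pose proof W2_neq0; pose proof W3_neq0;
  pose proof sin_bars_neq0; pose proof sin_double_pos;
  repeat split;
  repeat (apply Rmult_integral_contrapositive_currified || apply Ropp_neq_0_compat
          || apply pow_nonzero);
  lra.

Lemma MM_double :
  MM (2 * p) (2 * q) (2 * r) (2 * t)
  = sin (2 * p) * sin (2 * q) * sin (2 * r) * sin (2 * t) / (Sal * Sbe * Sga * Sde).
Proof.
  unfold MM, ca, cb, cc, cd.
  rewrite albar_double, bebar_double, gabar_double, debar_double.
  field; nonzero.
Qed.

Lemma sin_bars_pos : 0 < Sal /\ 0 < Sbe /\ 0 < Sga /\ 0 < Sde.
Proof.
  destruct adm as (Hp & Hq & Hr & Ht & _ & HM).
  rewrite MM_double in HM.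
  destruct sin_double_pos as (Hsp & Hsq & Hsr & Hst).
  apply prod4_pos_all_pos;
    [eapply pos_of_div_pos; [exact HM | repeat apply Rmult_lt_0_compat; assumption] | ..].
  (* any two barred angles have sum in (0, 2 pi) and difference in (-pi, pi) *)
  all: intros Hneg; repeat split; apply (sin_nonneg_of_other_neg _ _ Hneg); lra.
Qed.

Lemma xx_double : xx (2 * p) (2 * q) (2 * r) (2 * t) = Sal * Sde / (Ssig * W3).
Proof.
  unfold xx, rr, ca, cd; rewrite albar_double, debar_double.
  apply ratio_prod_sub1_inv; [apply sin_mul_sigma_pt | nonzero ..].
Qed.

Lemma yy_double : yy (2 * p) (2 * q) (2 * r) (2 * t) = Sga * Sde / - (Ssig * W1).
Proof.
  unfold yy, ss, cc, cd; rewrite gabar_double, debar_double.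
  apply ratio_prod_sub1_inv; [rewrite sin_mul_sigma_rt; ring | nonzero ..].
Qed.

Lemma zz_double : zz (2 * p) (2 * q) (2 * r) (2 * t) = Sal * Sga / (Ssig * W2).
Proof.
  unfold zz, ff, ca, cc; rewrite albar_double, gabar_double.
  apply ratio_prod_sub1_inv; [apply sin_mul_sigma_pr | nonzero ..].
Qed.

Lemma uu_double :
  uu (2 * p) (2 * q) (2 * r) (2 * t) = - (Ssig * W1 * W2 * W3) / (Sal * Sbe * Sga * Sde).
Proof. unfold uu; rewrite MM_double, sin_mul4_sigma; field; nonzero. Qed.

Lemma uu_double_sub1 :
  uu (2 * p) (2 * q) (2 * r) (2 * t) - 1
  = - (sin (2 * p) * sin (2 * q) * sin (2 * r) * sin (2 * t)) / (Sal * Sbe * Sga * Sde).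
Proof. unfold uu; rewrite MM_double; field; nonzero. Qed.

Local Notation x := (xx (2 * p) (2 * q) (2 * r) (2 * t)).
Local Notation y := (yy (2 * p) (2 * q) (2 * r) (2 * t)).
Local Notation z := (zz (2 * p) (2 * q) (2 * r) (2 * t)).
Local Notation u := (uu (2 * p) (2 * q) (2 * r) (2 * t)).

Lemma xx_double_add1 : 1 + x = sin (2 * p) * sin (2 * t) / (Ssig * W3).
Proof. rewrite xx_double, sin_mul_sigma_pt; field; nonzero. Qed.

Lemma yy_double_add1 : 1 + y = sin (2 * r) * sin (2 * t) / - (Ssig * W1).
Proof. rewrite yy_double, sin_mul_sigma_rt; field; nonzero. Qed.

Lemma zz_double_add1 : 1 + z = sin (2 * p) * sin (2 * r) / (Ssig * W2).
Proof. rewrite zz_double, sin_mul_sigma_pr; field; nonzero. Qed.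

Lemma uu_xx_double_add1 : 1 + u * x = sin (2 * p) * sin (2 * t) / (Sbe * Sga).
Proof. rewrite uu_double, xx_double, sin_mul_bars_pt; field; nonzero. Qed.

Lemma uu_yy_double_add1 : 1 + u * y = sin (2 * r) * sin (2 * t) / (Sal * Sbe).
Proof. rewrite uu_double, yy_double, sin_mul_bars_rt; field; nonzero. Qed.

Lemma uu_zz_double_add1 : 1 + u * z = sin (2 * p) * sin (2 * r) / (Sbe * Sde).
Proof. rewrite uu_double, zz_double, sin_mul_bars_pr; field; nonzero. Qed.

Ltac substitute_xyzu :=
  rewrite ?xx_double_add1, ?yy_double_add1, ?zz_double_add1,
    ?uu_xx_double_add1, ?uu_yy_double_add1, ?uu_zz_double_add1, ?uu_double_sub1,
    ?xx_double, ?yy_double, ?zz_double, ?uu_double;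
  field; nonzero.

Ltac positivity := repeat (apply pow_lt || apply Rmult_lt_0_compat); assumption.

Ltac signed_cos_formula identity k P :=
  destruct sin_bars_pos as (? & ? & ? & ?); destruct sin_double_pos as (? & ? & ? & ?);
  eapply (eq_sign_div_sqrt _ _ _ k P);
  [ apply identity | nonzero | nonzero | positivity
  | rewrite eps_double, !sign_mul_pos_r by assumption; reflexivity
  | substitute_xyzu | substitute_xyzu ].

Local Notation e := (eps (2 * p) (2 * q) (2 * r) (2 * t)).

Lemma cos_2p_eq :
  cos (2 * p) = e * (1 - y*z*u + x*z*u - x*y*u) / (2 * sqrt (x*z*u * (1 + y) * (1 + u*y))).
Proof. signed_cos_formula two_cos_2p_mul (Ssig * Sbe) (sin (2 * r) * sin (2 * t)). Qed.


Lemma cos_2r_eq :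
  cos (2 * r) = e * (1 + y*z*u - x*z*u - x*y*u) / (2 * sqrt (y*z*u * (1 + x) * (1 + u*x))).
Proof. signed_cos_formula two_cos_2r_mul (Ssig * Sbe) (sin (2 * p) * sin (2 * t)). Qed.

Lemma cos_2t_eq :
  cos (2 * t) = e * (1 - y*z*u - x*z*u + x*y*u) / (2 * sqrt (x*y*u * (1 + z) * (1 + u*z))).
Proof. signed_cos_formula two_cos_2t_mul (Ssig * Sbe) (sin (2 * p) * sin (2 * r)). Qed.

Lemma cos_sigm_eq :
  cos (sigm (2 * p) (2 * q) (2 * r) (2 * t))
  = (1 - u * (x*y + x*z + y*z + 2*x*y*z))
    / (2 * sqrt (x*y*z*u^2 * (1 + x) * (1 + y) * (1 + z))).
Proof.
  rewrite sigm_double.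
  destruct sin_bars_pos as (? & Hbe & ? & ?); destruct sin_double_pos as (? & ? & ? & ?).
  eapply (eq_div_sqrt _ _ _ (Ssig * Ssig * Sbe) (sin (2 * p) * sin (2 * r) * sin (2 * t)));
  [ apply two_cos_sigma_mul | nonzero | | positivity | substitute_xyzu | substitute_xyzu ].
  apply Rmult_lt_0_compat; [apply Rsqr_pos_lt, sin_sigma_neq0 | exact Hbe].
Qed.

Lemma cos_2q_eq :
  cos (2 * q) = e * (u * (1 + x) * (1 + y) * (1 + z) + (1 + u*x) * (1 + u*y) * (1 + u*z)
                     - u*x*y*z * (u - 1)^2)
                  / (2 * sqrt (u * (1 + x) * (1 + y) * (1 + z)
                               * (1 + u*x) * (1 + u*y) * (1 + u*z))).
Proof.
  signed_cos_formula two_cos_2q_mul (Ssig * Sal * Sbe * Sbe * Sga * Sde)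
    ((sin (2 * p) * sin (2 * r) * sin (2 * t)) ^ 2).
Qed.

End HalfAngles.

Theorem lemma6 (al be ga de : nat -> R)
  (H : forall i : nat, (1 <= i <= 4)%nat -> admissible (al i) (be i) (ga i) (de i)) :
  forall i : nat, (1 <= i <= 4)%nat ->
  let e := eps (al i) (be i) (ga i) (de i) in
  let u := uu (al i) (be i) (ga i) (de i) in
  let x := xx (al i) (be i) (ga i) (de i) in
  let y := yy (al i) (be i) (ga i) (de i) in
  let z := zz (al i) (be i) (ga i) (de i) in
  let s := sigm (al i) (be i) (ga i) (de i) in
  cos (al i) = e * (1 - y*z*u + x*z*u - x*y*u)
                 / (2 * sqrt (x*z*u * (1 + y) * (1 + u*y))) /\
  cos (ga i) = e * (1 + y*z*u - x*z*u - x*y*u)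
                 / (2 * sqrt (y*z*u * (1 + x) * (1 + u*x))) /\
  cos (de i) = e * (1 - y*z*u - x*z*u + x*y*u)
                 / (2 * sqrt (x*y*u * (1 + z) * (1 + u*z))) /\
  cos s = (1 - u * (x*y + x*z + y*z + 2*x*y*z))
            / (2 * sqrt (x*y*z*u^2 * (1 + x) * (1 + y) * (1 + z))) /\
  cos (be i) = e * (u * (1 + x) * (1 + y) * (1 + z)
                    + (1 + u*x) * (1 + u*y) * (1 + u*z)
                    - u*x*y*z * (u - 1)^2)
                 / (2 * sqrt (u * (1 + x) * (1 + y) * (1 + z)
                              * (1 + u*x) * (1 + u*y) * (1 + u*z))).
Proof.
  intros i Hi.
  pose proof (H i Hi) as Hadm.
  replace (al i) with (2 * (al i / 2)) in * by field.
  replace (be i) with (2 * (be i / 2)) in * by field.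
  replace (ga i) with (2 * (ga i / 2)) in * by field.
  replace (de i) with (2 * (de i / 2)) in * by field.
  cbv zeta; repeat split.
  - apply cos_2p_eq; exact Hadm.
  - apply cos_2r_eq; exact Hadm.
  - apply cos_2t_eq; exact Hadm.
  - apply cos_sigm_eq; exact Hadm.
  - apply cos_2q_eq; exact Hadm.
Qed.
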